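(* Let $M\ge 1$, let $A$ be a real $M\times M$ matrix, let $g,U_0\in\mathbb{R}^M$, let $T>0$, and let $I$ denote the $M\times M$ identity matrix. Assume there exists a diagonal matrix $D\in\mathbb{R}^{M\times M}$ with positive diagonal entries such that $DA+A^{\mathrm T}D$ is negative semidefinite. For an integer $N\ge1$ put $\Delta t=T/N$ and consider the following two processes (all inequalities between vectors are componentwise, and maxima of vectors are componentwise). (Exact process, backward Euler LCP.) Vectors $U_n,\lambda_n\in\mathbb{R}^M$, $n=1,\dots,N$, satisfy, successively for $n=1,\dots,N$, $$(I-\Delta t A)U_n = U_{n-1}+\Delta t\, g+\Delta t\,\lambda_n,\qquad \lambda_n\ge 0,\quad U_n\ge U_0,\quad (U_n-U_0)^{\mathrm T}\lambda_n=0 .$$ (Ikonen--Toivanen splitting process.) Set $\widehat U_0=U_0$ and $\widehat\lambda_0=0$, and for $n=1,\dots,N$ let $\bar\lambda_n=\widehat\lambda_{n-1}$, let $\bar U_n$ solve $$(I-\Delta t A)\bar U_n=\widehat U_{n-1}+\Delta t\, g+\Delta t\,\bar\lambda_n,$$ and let $\widehat U_n,\widehat\lambda_n\in\mathbb{R}^M$ satisfy $$\widehat U_n-\bar U_n-\Delta t\,(\widehat\lambda_n-\bar\lambda_n)=0,\qquad \widehat\lambda_n\ge0,\quad \widehat U_n\ge U_0,\quad (\widehat U_n-U_0)^{\mathrm T}\widehat\lambda_n=0.$$ Assume further that there is a real constant $\nu$, independent of $\Delta t>0$, such that $$\|\lambda_1\|_D+\sum_{n=2}^{N}\|\lambda_n-\lambda_{n-1}\|_D\le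 \nu .$$ Then $$\max_{1\le n\le N}\|U_n-\widehat U_n\|_D\le \nu\,\Delta t$$ whenever $\Delta t=T/N$ with integer $N\ge1$.
   Context: For a diagonal matrix $D$ with positive diagonal entries, the scaled inner product on $\mathbb{R}^M$ is $\langle x,y\rangle_D=y^{\mathrm T}Dx$, and $\|x\|_D=\sqrt{\langle x,x\rangle_D}=\sqrt{x^{\mathrm T}Dx}$ is the induced vector norm. The exact process is the backward Euler ($\theta=1$) time discretization of the semidiscrete complementarity problem $U'\ge AU+g$, $U\ge U_0$, $(U-U_0)^{\mathrm T}(U'-AU-g)=0$, written with an auxiliary (Lagrange multiplier) vector $\lambda_n$; the splitting process replaces it by a linear solve followed by a componentwise update, with the multiplier of the previous step used as $\bar\lambda_n$. *)

From HB Require Import structures.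
From mathcomp Require Import all_boot all_order all_algebra.
Set Implicit Arguments. Unset Strict Implicit. Unset Printing Implicit Defensive.
Import Order.TTheory GRing.Theory Num.Theory.
Local Open Scope ring_scope.

Definition vge (R : realFieldType) (M : nat) (x y : 'cV[R]_M) : Prop :=
  forall i : 'I_M, y i 0 <= x i 0.

Definition dotD (R : realFieldType) (M : nat) (D : 'M[R]_M) (x y : 'cV[R]_M) : R :=
  (y^T *m D *m x) 0 0.

Definition normD (R : rcfType) (M : nat) (D : 'M[R]_M) (x : 'cV[R]_M) : R :=
  Num.sqrt (dotD D x x).

Definition neg_semidef (R : realFieldType) (M : nat) (B : 'M[R]_M) : Prop :=
  forall x : 'cV[R]_M, (x^T *m B *m x) 0 0 <= 0.

From HB Require Import structures.
From mathcomp Require Import all_boot all_order all_algebra.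
From mathcomp Require Import ring lra.
Set Implicit Arguments. Unset Strict Implicit. Unset Printing Implicit Defensive.
Import Order.TTheory GRing.Theory Num.Theory.
Local Open Scope ring_scope.

(* With B = dt A, dissipativity of A in the D-inner product makes I - B invertible and
   turns (I + B)(I - B)^-1 and B (I - B)^-1 into D-contractions.  For the error
   e_n = U_n - Uh_n and b_n = dt (lam_n - lh_n), the two schemes give
     (I - B)(e_n - b_n) = 1/2 (I - B)(e_(n-1) - b_(n-1)) + 1/2 (I + B)(e_(n-1) + b_(n-1))
                          + B dt (lam_n - lam_(n-1)),
   while complementarity makes e_n and b_n of opposite signs componentwise, so that
   |e_n + b_n|_D and |e_n|_D are both at most |e_n - b_n|_D.  Hence |e_n - b_n|_D grows
   by at most dt |lam_n - lam_(n-1)|_D per step, and summing gives the bound. *)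

Section WeightedNorm.

Variables (R : rcfType) (M : nat) (d : 'I_M -> R).
Implicit Types (x y z : 'cV[R]_M) (B : 'M[R]_M).

Definition wdot x y : R := \sum_i d i * x i 0 * y i 0.
Definition wnorm x : R := Num.sqrt (wdot x x).

Lemma wdotC x y : wdot x y = wdot y x.
Proof. by apply: eq_bigr => i _; ring. Qed.

Lemma wdot0l y : wdot 0 y = 0.
Proof. by rewrite /wdot big1 // => i _; rewrite mxE; ring. Qed.

Lemma wdotDl x y z : wdot (x + y) z = wdot x z + wdot y z.
Proof. rewrite /wdot -big_split; apply: eq_bigr => i _; rewrite !mxE /=; ring. Qed.

Lemma wdotNl x z : wdot (- x) z = - wdot x z.
Proof. rewrite /wdot -sumrN; apply: eq_bigr => i _; rewrite !mxE; ring. Qed.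

Lemma wdotZl c x z : wdot (c *: x) z = c * wdot x z.
Proof. rewrite /wdot mulr_sumr; apply: eq_bigr => i _; rewrite !mxE; ring. Qed.

Lemma wdotDr x y z : wdot z (x + y) = wdot z x + wdot z y.
Proof. by rewrite !(wdotC z) wdotDl. Qed.

Lemma wdotNr x z : wdot z (- x) = - wdot z x.
Proof. by rewrite !(wdotC z) wdotNl. Qed.

Lemma wdotZr c x z : wdot z (c *: x) = c * wdot z x.
Proof. by rewrite !(wdotC z) wdotZl. Qed.

Definition wdotE := (wdotDl, wdotDr, wdotNl, wdotNr, wdotZl, wdotZr).

Lemma wdot_subB_addB B y :
  wdot ((1%:M - B) *m y) ((1%:M - B) *m y) =
  wdot ((1%:M + B) *m y) ((1%:M + B) *m y) - 4 * wdot (B *m y) y.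
Proof.
rewrite mulmxBl mulmxDl mul1mx !wdotE (wdotC y (B *m y)); ring.
Qed.

Lemma wdot_subB B y :
  wdot ((1%:M - B) *m y) ((1%:M - B) *m y) =
  wdot y y + wdot (B *m y) (B *m y) - 2 * wdot (B *m y) y.
Proof. rewrite mulmxBl mul1mx !wdotE (wdotC y (B *m y)); ring. Qed.

Lemma wnorm_ge0 x : 0 <= wnorm x.
Proof. exact: sqrtr_ge0. Qed.

Lemma ler_wnorm x y : wdot x x <= wdot y y -> wnorm x <= wnorm y.
Proof. exact: ler_wsqrtr. Qed.

Lemma dotD_diag x y :
  dotD (diag_mx (\row_i d i)) x y = wdot x y.
Proof. rewrite /dotD mul_mx_diag !mxE; apply: eq_bigr => i _; rewrite !mxE; ring. Qed.

Lemma normD_diag x :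
  normD (diag_mx (\row_i d i)) x = wnorm x.
Proof. by rewrite /normD dotD_diag. Qed.

Lemma neg_semidef_wdot (A : 'M[R]_M) y :
  let D := diag_mx (\row_i d i) in
  neg_semidef (D *m A + A^T *m D) -> wdot (A *m y) y <= 0.
Proof.
move=> D /(_ y); rewrite mulmxDr mulmxDl mxE.
have -> : y^T *m (D *m A) *m y = y^T *m D *m (A *m y) by rewrite !mulmxA.
have -> : y^T *m (A^T *m D) *m y = (A *m y)^T *m D *m y by rewrite trmx_mul !mulmxA.
rewrite -[X in X + _]/(dotD D (A *m y) y) -[X in _ + X]/(dotD D y (A *m y)).
by rewrite !dotD_diag (wdotC y); lra.
Qed.

Hypothesis d_gt0 : forall i, 0 < d i.

Lemma wdot_ge0 x : 0 <= wdot x x.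
Proof. by apply: sumr_ge0 => i _; have := d_gt0 i; nra. Qed.

Lemma wdot0_eq0 x : wdot x x = 0 -> x = 0.
Proof.
move=> x0; apply/matrixP => i j; rewrite (ord1 j) mxE.
have : d i * x i 0 * x i 0 = 0.
  apply: (psumr_eq0P (P := predT) (F := fun i => d i * x i 0 * x i 0)) => // k _.
  by have := d_gt0 k; nra.
by rewrite -mulrA => /eqP; rewrite mulf_eq0 (gt_eqF (d_gt0 i)) mulf_eq0 orbb => /eqP.
Qed.

Lemma sqr_wnorm x : wnorm x ^+ 2 = wdot x x.
Proof. by rewrite sqr_sqrtr // wdot_ge0. Qed.

Lemma wnorm0_eq0 x : wnorm x = 0 -> x = 0.
Proof. by move=> x0; apply: wdot0_eq0; rewrite -sqr_wnorm x0 expr0n. Qed.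

Lemma wnormZ c x : wnorm (c *: x) = `|c| * wnorm x.
Proof. by rewrite /wnorm wdotZl wdotZr mulrA -expr2 sqrtrM ?sqr_ge0 ?sqrtr_sqr. Qed.

Lemma wdot_le_wnormM x y : wdot x y <= wnorm x * wnorm y.
Proof.
have [->|x_neq0] := eqVneq x 0; first by rewrite wdot0l mulr_ge0 ?wnorm_ge0.
have [->|y_neq0] := eqVneq y 0; first by rewrite wdotC wdot0l mulr_ge0 ?wnorm_ge0.
have a_gt0 : 0 < wnorm x.
  by rewrite lt0r wnorm_ge0 andbT; apply: contra_neq x_neq0; exact: wnorm0_eq0.
have b_gt0 : 0 < wnorm y.
  by rewrite lt0r wnorm_ge0 andbT; apply: contra_neq y_neq0; exact: wnorm0_eq0.
have := wdot_ge0 (wnorm y *: x - wnorm x *: y).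
rewrite !wdotE (wdotC y x) -!sqr_wnorm => h.
suff : wnorm x * wnorm y * wdot x y <= wnorm x * wnorm y * (wnorm x * wnorm y).
  by rewrite ler_pM2l ?mulr_gt0.
nra.
Qed.

Lemma ler_wnormD x y : wnorm (x + y) <= wnorm x + wnorm y.
Proof.
rewrite -[wnorm x + _]ger0_norm ?addr_ge0 ?wnorm_ge0 // -sqrtr_sqr.
apply: ler_wsqrtr; rewrite !wdotE (wdotC y x) -!sqr_wnorm.
have := wdot_le_wnormM x y; nra.
Qed.

Lemma wnorm_le_sub x y : (forall i, x i 0 * y i 0 <= 0) ->
  wnorm (x + y) <= wnorm (x - y) /\ wnorm x <= wnorm (x - y).
Proof.
move=> xy_le0; split; apply/ler_wnorm/ler_sum => i _; rewrite !mxE;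
  by have := d_gt0 i; have := xy_le0 i; nra.
Qed.

End WeightedNorm.

Lemma mulmx_subB_comm (R : pzRingType) (M : nat) (B C : 'M[R]_M) (w : 'cV[R]_M) :
  C *m B = B *m C -> (1%:M - B) *m (C *m w) = C *m ((1%:M - B) *m w).
Proof. by move=> CB; rewrite !mulmxA mulmxBl mulmxBr mul1mx mulmx1 CB. Qed.

Section Dissipative.

Variables (R : rcfType) (M : nat) (d : 'I_M -> R) (B : 'M[R]_M).
Hypothesis d_gt0 : forall i, 0 < d i.
Hypothesis B_diss : forall y, wdot d (B *m y) y <= 0.
Local Notation wnorm := (wnorm d).
Local Notation L := (1%:M - B).

Lemma wnorm_le_subB y : wnorm y <= wnorm (L *m y).
Proof.
apply: ler_wnorm; rewrite wdot_subB.
by have := B_diss y; have := wdot_ge0 d_gt0 (B *m y); lra.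
Qed.

Lemma wnorm_B_le_subB y : wnorm (B *m y) <= wnorm (L *m y).
Proof.
apply: ler_wnorm; rewrite wdot_subB.
by have := B_diss y; have := wdot_ge0 d_gt0 y; lra.
Qed.

Lemma wnorm_addB_le_subB y : wnorm ((1%:M + B) *m y) <= wnorm (L *m y).
Proof. by apply: ler_wnorm; rewrite wdot_subB_addB; have := B_diss y; lra. Qed.

Lemma unitmx_subB : L \in unitmx.
Proof.
rewrite -unitmx_tr unitmxE unitfE; apply/negP => /det0P [v v_neq0 vL0].
have Lv0 : L *m v^T = 0 by rewrite -[L]trmxK -trmx_mul vL0 trmx0.
have v0 : v^T = 0.
  apply: (wnorm0_eq0 d_gt0); apply/eqP; rewrite eq_le wnorm_ge0 andbT.
  by have := wnorm_le_subB v^T; rewrite Lv0 /wnorm wdot0l sqrtr0.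
by move: v_neq0; rewrite -[v]trmxK v0 trmx0 eqxx.
Qed.

(* Inverting L splits x into half of p, the Cayley transform (1+B)L^-1 of q
   and B L^-1 of e; dissipativity makes the last two contractions. *)
Lemma wnorm_cayley_step x p q e :
  L *m x = 2^-1 *: (L *m p) + 2^-1 *: ((1%:M + B) *m q) + B *m e ->
  wnorm q <= wnorm p -> wnorm x <= wnorm p + wnorm e.
Proof.
move=> Lx qp; have Lu := unitmx_subB.
set wq := invmx L *m q; set we := invmx L *m e.
have Lwq : L *m wq = q by rewrite mulKVmx.
have Lwe : L *m we = e by rewrite mulKVmx.
have -> : x = 2^-1 *: p + 2^-1 *: ((1%:M + B) *m wq) + B *m we.
  apply: (can_inj (mulKmx Lu)); rewrite Lx !mulmxDr -!scalemxAr.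
  rewrite (@mulmx_subB_comm _ _ B (1%:M + B) wq) ?(@mulmx_subB_comm _ _ B B we)
    ?Lwq ?Lwe //.
  by rewrite mulmxDl mulmxDr mul1mx mulmx1.
have half : `|2^-1 : R| = 2^-1 by rewrite ger0_norm ?invr_ge0.
have := ler_wnormD d_gt0 (2^-1 *: p + 2^-1 *: ((1%:M + B) *m wq)) (B *m we).
have := ler_wnormD d_gt0 (2^-1 *: p) (2^-1 *: ((1%:M + B) *m wq)).
rewrite !wnormZ // half.
have := wnorm_addB_le_subB wq; have := wnorm_B_le_subB we.
rewrite Lwq Lwe; lra.
Qed.

Lemma wnorm_cayley_iter (p q e : nat -> 'cV[R]_M) (N : nat) :
  p 0%N = 0 ->
  (forall n, (n < N)%N -> wnorm (q n) <= wnorm (p n)) ->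
  (forall n, (n < N)%N ->
     L *m p n.+1 = 2^-1 *: (L *m p n) + 2^-1 *: ((1%:M + B) *m q n) + B *m e n.+1) ->
  forall n, (n <= N)%N -> wnorm (p n) <= \sum_(1 <= k < n.+1) wnorm (e k).
Proof.
move=> p0 qp step; elim=> [_|n IH n_lt].
  by rewrite p0 big_geq // /wnorm wdot0l sqrtr0.
rewrite big_nat_recr //=.
have := wnorm_cayley_step (step n n_lt) (qp n n_lt).
have := IH (ltnW n_lt); lra.
Qed.

End Dissipative.

Definition lcp_sol (R : realFieldType) (M : nat) (U0 u l : 'cV[R]_M) : Prop :=
  vge l 0 /\ vge u U0 /\ dotD 1%:M (u - U0) l = 0.

Lemma lcp_sol_coord (R : realFieldType) (M : nat) (U0 u l : 'cV[R]_M) (i : 'I_M) :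
  lcp_sol U0 u l -> [/\ 0 <= l i 0, U0 i 0 <= u i 0 & (u i 0 - U0 i 0) * l i 0 = 0].
Proof.
move=> [l_ge0 [u_ge u_l]]; have l_ge0' k : 0 <= l k 0 by have := l_ge0 k; rewrite mxE.
split=> //; have : (u - U0) i 0 * l i 0 = 0.
  apply: (psumr_eq0P (P := predT) (F := fun k => (u - U0) k 0 * l k 0)) => // [k _|].
    by rewrite !mxE; have := l_ge0' k; have := u_ge k; nra.
  move: u_l; rewrite /dotD mulmx1 mxE; apply: etrans; apply: eq_bigr => k _.
  by rewrite !mxE mulrC.
by rewrite !mxE.
Qed.

Lemma lcp_sol_monotone (R : realFieldType) (M : nat) (U0 u l u' l' : 'cV[R]_M) (i : 'I_M) :
  lcp_sol U0 u l -> lcp_sol U0 u' l' -> (u - u') i 0 * (l - l') i 0 <= 0.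
Proof.
move=> /(lcp_sol_coord i) [l1 u1 c1] /(lcp_sol_coord i) [l2 u2 c2]; rewrite !mxE; nra.
Qed.

Lemma splitting_identity (R : realFieldType) (M : nat) (B : 'M[R]_M) (dt : R)
    (c u u' ub uh uh' l l' lh lh' : 'cV[R]_M) :
  (1%:M - B) *m u = u' + c + dt *: l ->
  (1%:M - B) *m ub = uh' + c + dt *: lh' ->
  uh - ub - dt *: (lh - lh') = 0 ->
  (1%:M - B) *m (u - uh - dt *: (l - lh)) =
    2^-1 *: ((1%:M - B) *m (u' - uh' - dt *: (l' - lh')))
    + 2^-1 *: ((1%:M + B) *m (u' - uh' + dt *: (l' - lh'))) + B *m (dt *: (l - l')).
Proof.
move=> exact_eq split_eq ub_split; have ub_def : ub = uh - dt *: (lh - lh').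
  by apply/eqP; rewrite eq_sym subr_eq addrC -subr_eq -subr_eq0 ub_split.
rewrite ub_def in split_eq.
rewrite !(mulmxBl, mulmxDl, mul1mx, mulNmx, mulmxBr, mulmxDr, mulmxN) -!scalemxAr
  !(mulmxBr, mulmxDr) in exact_eq split_eq *.
apply/matrixP => i j; move/matrixP: exact_eq => /(_ i j); move/matrixP: split_eq => /(_ i j).
rewrite !mxE; lra.
Qed.

Section SplittingError.

Variables (R : rcfType) (M : nat) (d : 'I_M -> R) (A : 'M[R]_M) (g U0 : 'cV[R]_M).
Variables (dt : R) (N : nat) (U lam Ub Uh lh : nat -> 'cV[R]_M).
Hypothesis d_gt0 : forall i, 0 < d i.
Hypothesis A_diss : forall y, wdot d (A *m y) y <= 0.
Hypothesis dt_ge0 : 0 <= dt.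
Hypothesis U_0 : U 0%N = U0.
Hypothesis exact_step : forall n, (1 <= n <= N)%N ->
  (1%:M - dt *: A) *m U n = U n.-1 + dt *: g + dt *: lam n /\ lcp_sol U0 (U n) (lam n).
Hypothesis Uh_0 : Uh 0%N = U0.
Hypothesis lh_0 : lh 0%N = 0.
Hypothesis split_step : forall n, (1 <= n <= N)%N ->
  (1%:M - dt *: A) *m Ub n = Uh n.-1 + dt *: g + dt *: lh n.-1 /\
  Uh n - Ub n - dt *: (lh n - lh n.-1) = 0 /\ lcp_sol U0 (Uh n) (lh n).

Local Notation wnorm := (wnorm d).

(* [lam 0] is not part of the scheme; the estimate uses lambda_0 = 0. *)
Let lam0 n := if n is 0 then 0 else lam n.
Let err n := U n - Uh n.
Let p n := err n - dt *: (lam0 n - lh n).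
Let q n := err n + dt *: (lam0 n - lh n).
Let jump n := dt *: (lam0 n - lam0 n.-1).

Lemma dtA_diss y : wdot d ((dt *: A) *m y) y <= 0.
Proof. by rewrite -scalemxAl wdotZl mulr_ge0_le0. Qed.

Lemma splitting_err_sign n : (1 <= n <= N)%N ->
  wnorm (q n) <= wnorm (p n) /\ wnorm (err n) <= wnorm (p n).
Proof.
move=> n_range; apply: wnorm_le_sub => // i.
have [_ lcp_exact] := exact_step n_range; have [_ [_ lcp_split]] := split_step n_range.
have := lcp_sol_monotone i lcp_exact lcp_split.
have -> : lam0 n = lam n by case: n n_range {lcp_exact lcp_split}.
by rewrite /err !mxE mulrCA; apply: mulr_ge0_le0.
Qed.

Lemma splitting_err_step n : (n < N)%N ->
  (1%:M - dt *: A) *m p n.+1 = 2^-1 *: ((1%:M - dt *: A) *m p n)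
    + 2^-1 *: ((1%:M + dt *: A) *m q n) + (dt *: A) *m jump n.+1.
Proof.
move=> n_lt; have n_range : (1 <= n.+1 <= N)%N by [].
have [exact_eq _] := exact_step n_range; have [split_eq [ub_split _]] := split_step n_range.
exact: (splitting_identity (lam0 n) exact_eq split_eq ub_split).
Qed.

Lemma splitting_error_bound n : (1 <= n <= N)%N ->
  wnorm (U n - Uh n) <=
  dt * (wnorm (lam 1%N) + \sum_(2 <= k < N.+1) wnorm (lam k - lam k.-1)).
Proof.
move=> n_range; have [_ err_le] := splitting_err_sign n_range.
apply: (le_trans err_le).
have p0 : p 0%N = 0 by rewrite /p /err U_0 Uh_0 lh_0 !subrr scaler0 subrr.
have qp k : (k < N)%N -> wnorm (q k) <= wnorm (p k).
  case: k => [_|k k_lt]; first by rewrite /q /err U_0 Uh_0 lh_0 p0 !subrr scaler0 addr0.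
  by have [] := @splitting_err_sign k.+1 (ltnW k_lt).
have n_le : (n <= N)%N by case/andP: n_range.
apply: (le_trans (wnorm_cayley_iter d_gt0 dtA_diss p0 qp splitting_err_step n_le)).
have jumpE k : wnorm (jump k) = dt * wnorm (lam0 k - lam0 k.-1).
  by rewrite wnormZ ger0_norm.
have n_gt0 : (0 < n)%N by case/andP: n_range.
rewrite mulrDr mulr_sumr big_ltn ?ltnS // jumpE /= subr0 lerD2l.
rewrite [X in _ <= X](big_cat_nat _ (n := n.+1)) ?ltnS //=; apply: ler_wpDr.
- by apply: sumr_ge0 => k _; rewrite mulr_ge0 ?wnorm_ge0.
- by apply: ler_sum_nat => k /andP [k_gt1 _]; rewrite jumpE; case: k k_gt1 => [|[|k]].
Qed.

End SplittingError.

Theorem theorem1 (R : rcfType) (M : nat) (A : 'M[R]_M) (g U0 : 'cV[R]_M)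
  (T : R) (d : 'I_M -> R) (nu : R) (N : nat)
  (U lam Ub Uh lh : nat -> 'cV[R]_M) :
  (0 < M)%N -> 0 < T ->
  (forall i, 0 < d i) ->
  neg_semidef (diag_mx (\row_i d i) *m A + A^T *m diag_mx (\row_i d i)) ->
  (1 <= N)%N ->
  let dt := T / N%:R in
  let D := diag_mx (\row_i d i) in
  U 0%N = U0 ->
  (forall n, (1 <= n <= N)%N ->
     (1%:M - dt *: A) *m U n = U n.-1 + dt *: g + dt *: lam n /\
     vge (lam n) 0 /\ vge (U n) U0 /\ dotD 1%:M (U n - U0) (lam n) = 0) ->
  Uh 0%N = U0 -> lh 0%N = 0 ->
  (forall n, (1 <= n <= N)%N ->
     (1%:M - dt *: A) *m Ub n = Uh n.-1 + dt *: g + dt *: lh n.-1 /\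
     Uh n - Ub n - dt *: (lh n - lh n.-1) = 0 /\
     vge (lh n) 0 /\ vge (Uh n) U0 /\ dotD 1%:M (Uh n - U0) (lh n) = 0) ->
  normD D (lam 1%N) + \sum_(2 <= n < N.+1) normD D (lam n - lam n.-1) <= nu ->
  \big[Num.max/0]_(1 <= n < N.+1) normD D (U n - Uh n) <= nu * dt.
Proof.
move=> _ T_gt0 d_gt0 A_nsd _ dt D U_0 exact_step Uh_0 lh_0 split_step nu_ge.
rewrite normD_diag (eq_bigr _ (fun k _ => normD_diag d (lam k - lam k.-1))) in nu_ge.
have dt_ge0 : 0 <= dt by rewrite divr_ge0 ?ler0n ?ltW.
have bound := splitting_error_bound d_gt0 (fun y => neg_semidef_wdot y A_nsd)
  dt_ge0 U_0 exact_step Uh_0 lh_0 split_step.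
rewrite mulrC big_nat_cond; apply: bigmax_le => [|n /andP [n_range _]].
  rewrite mulr_ge0 // (le_trans _ nu_ge) // addr_ge0 ?wnorm_ge0 //.
  by apply: sumr_ge0 => k _; apply: wnorm_ge0.
rewrite /D normD_diag; apply: le_trans (bound n n_range) _.
by rewrite ler_wpM2l.
Qed.
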